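(* Let $A$ be an $n\times n$ binary matrix with zero diagonal and $\widetilde A=A+I_n$. Let $f=\mathbf{F}(j_1,\dots,j_s)$ be a proper face of $\mathcal{C}^n$ with $1\le|j_1|<\dots<|j_s|\le n$. Then the face family $\widehat f$ of $f$ in $\mathcal{F}_A$ consists of exactly $2^d$ faces, where $d=\mathrm{rank}_{\mathbb{Z}_2}\big(\widetilde A^{|j_1|\cdots|j_s|}_{|j_1|\cdots|j_s|}\big)$.
   Context: $[\pm n]=\{\pm1,\dots,\pm n\}$, $\mathcal{C}^n=\{x\in\mathbb{R}^n: -\tfrac14\le x_i\le\tfrac14\}$; $\mathbf{F}(i)$, $\mathbf{F}(-i)$ ($1\le i\le n$) are the facets in $\{x_i=\tfrac14\}$, $\{x_i=-\tfrac14\}$, and $\mathbf{F}(j_1,\dots,j_s)=\bigcap_i\mathbf{F}(j_i)$ for $j_i$ with distinct absolute values. Binary matrices have entries in $\mathbb{Z}_2$; $A^i_k$ denotes the $(i,k)$ entry viewed as $0$ or $1$. For $1\le a_1<\dots<a_s\le n$, $\widetilde A^{a_1\cdots a_s}_{a_1\cdots a_s}$ is the $s\times s$ principal submatrix of $\widetilde A$ on rows and columns $a_1,\dots,a_s$. $\mathcal{F}_A$ pairs $\mathbf{F}(j)$ with $\mathbf{F}(-j)$ via $\tau^A_j:\mathbf{F}(j)\to\mathbf{F}(-j)$, $\tau^A_j(x)=y$ with $y_{|j|}=-x_{|j|}$ and $y_k=(-1)^{A^{|j|}_k}x_k$ for $k\ne|j|$. A composition $\tau^A_{k_m}\circ\dots\circ\tau^A_{k_1}$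 applied to a proper face $f$ is valid if $f\subset\mathbf{F}(k_1)$ and $\tau^A_{k_i}\circ\dots\circ\tau^A_{k_1}(f)\subset\mathbf{F}(k_{i+1})$ for $1\le i<m$ ($m=0$ allowed). The face family $\widehat f$ is the set of faces $\tau^A_{k_m}\circ\dots\circ\tau^A_{k_1}(f)$ over all valid compositions. *)

From HB Require Import structures.
From mathcomp Require Import all_boot all_order all_algebra.
Set Implicit Arguments. Unset Strict Implicit. Unset Printing Implicit Defensive.
Import Order.TTheory GRing.Theory Num.Theory.
Local Open Scope ring_scope.

(* Points of R^n, as functions 'I_n -> R (coordinate i+1 is index i). *)
Definition point (R : realFieldType) (n : nat) := 'I_n -> R.
Definition pset (R : realFieldType) (n : nat) := point R n -> Prop.

(* A signed index j in [+-n] is a pair (k, b): |j| = k+1, sign positive iff b. *)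
Definition sidx (n : nat) := ('I_n * bool)%type.

Definition quarter (R : realFieldType) : R := (4%:R)^-1.

Definition cube (R : realFieldType) (n : nat) : pset R n :=
  fun x => forall i, - quarter R <= x i <= quarter R.

Definition sval (R : realFieldType) (b : bool) : R :=
  if b then quarter R else - quarter R.

Definition facet (R : realFieldType) (n : nat) (j : sidx n) : pset R n :=
  fun x => cube x /\ x j.1 = sval R j.2.

Definition faceF (R : realFieldType) (n : nat) (J : seq (sidx n)) : pset R n :=
  fun x => cube x /\ (forall j, j \in J -> x j.1 = sval R j.2).

(* The map tau^A_j (given by its formula, on all of R^n). *)
Definition tau (R : realFieldType) (n : nat) (A : 'M['F_2]_n) (j : sidx n)
  (x : point R n) : point R n :=
  fun k => if k == j.1 then - x k
           else if A j.1 k == 1 then - x k else x k.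

Definition imgset (R : realFieldType) (n : nat) (f : pset R n)
  (g : point R n -> point R n) : pset R n :=
  fun y => exists2 x, f x & y = g x.

(* Apply the composition tau_{k_m} o ... o tau_{k_1} (ks = [k_1; ...; k_m]) to f. *)
Definition apply_taus (R : realFieldType) (n : nat) (A : 'M['F_2]_n)
  (f : pset R n) (ks : seq (sidx n)) : pset R n :=
  foldl (fun g k => imgset g (tau A k)) f ks.

Fixpoint valid_comp (R : realFieldType) (n : nat) (A : 'M['F_2]_n)
  (f : pset R n) (ks : seq (sidx n)) : Prop :=
  match ks with
  | [::] => True
  | k :: ks' => (forall x, f x -> facet k x) /\ valid_comp A (imgset f (tau A k)) ks'
  end.

Definition face_family (R : realFieldType) (n : nat) (A : 'M['F_2]_n)
  (f : pset R n) (g : pset R n) : Prop :=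
  exists ks, valid_comp A f ks /\ (forall x, g x <-> apply_taus A f ks x).

Definition principal_submx (n : nat) (M : 'M['F_2]_n) (S : {set 'I_n}) :
  'M['F_2]_#|S| :=
  \matrix_(a < #|S|, b < #|S|) M (enum_val a) (enum_val b).

From Pilot Require Import Defs.
From HB Require Import structures.
From mathcomp Require Import all_boot all_order all_algebra.
From mathcomp Require Import mxabelem.
From mathcomp Require Import lra.
From Stdlib Require Import FunctionalExtensionality PropExtensionality.
Import Order.TTheory GRing.Theory Num.Theory.
Import Defs.
Set Implicit Arguments. Unset Strict Implicit.
Local Open Scope ring_scope.

(* Fix the index set S = {|j_1|, ..., |j_s|} and the principal
   submatrix M of A + I on S.  A face of the form "x_i = ±1/4 for every i in S"
   is encoded by a sign vector u in F_2^S (sign_face u).  Three facts drive the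
   proof:
   - a facet F(k) contains sign_face u only if |k| is in S and its sign is
     the one prescribed by u, so every valid composition only uses such k;
   - for such k, tau_k maps sign_face u onto sign_face (u + row_k M), because
     tau_k flips exactly the coordinates i with (A + I)_{|k| i} = 1;
   - conversely every F(k) with |k| in S and the prescribed sign is a facet
     containing sign_face u, so all these moves are available.
   Hence the face family of f = sign_face u0 is { sign_face (u0 + v) | v in
   the row space of M } (family_sign_face); distinct v give distinct faces, and
   the row space of M has 2^rank(M) elements, which gives the theorem. *)

Lemma F2_cases (x : 'F_2) : x = 0 \/ x = 1.
Proof. by case: x => [[|[|m]]] //= H; [left|right]; apply: val_inj. Qed.

Lemma quarter_gt0 (R : realFieldType) : 0 < quarter R.
Proof. by rewrite /quarter invr_gt0 ltr0n. Qed.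

Lemma sval_inj (R : realFieldType) (b c : bool) : sval R b = sval R c -> b = c.
Proof. by have := quarter_gt0 R; case: b; case: c => //= ? E; lra. Qed.

Lemma sval_add (R : realFieldType) (p q : 'F_2) :
  sval R ((p + q) == 1) = if q == 1 then - sval R (p == 1) else sval R (p == 1).
Proof. by case: (F2_cases p) => ->; case: (F2_cases q) => -> /=; rewrite ?opprK. Qed.

Section SignFaces.
Variables (R : realFieldType) (n : nat) (S : {set 'I_n}).

Definition sign_face (u : 'rV['F_2]_#|S|) : pset R n :=
  fun x => cube x /\ forall a, x (enum_val a) = sval R (u 0 a == 1).

(* A point of sign_face u which is 0 outside S, used to separate faces. *)
Definition sign_face_witness (u : 'rV['F_2]_#|S|) : point R n :=
  fun k => if [pick a | enum_val a == k] is Some a then sval R (u 0 a == 1) else 0.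

Lemma sign_face_witness_val (u : 'rV['F_2]_#|S|) a :
  sign_face_witness u (enum_val a) = sval R (u 0 a == 1).
Proof.
rewrite /sign_face_witness; case: pickP => [b /eqP /enum_val_inj -> //|/(_ a)].
by rewrite eqxx.
Qed.

Lemma sign_face_witnessP (u : 'rV['F_2]_#|S|) : sign_face u (sign_face_witness u).
Proof.
split=> [k|a]; last by rewrite sign_face_witness_val.
rewrite /sign_face_witness; have := quarter_gt0 R.
case: pickP => [b _|_] ?; last by apply/andP; split; lra.
by case: (u 0 b == 1) => /=; apply/andP; split; lra.
Qed.

Lemma sign_face_inj (u v : 'rV['F_2]_#|S|) :
  (forall x, sign_face u x <-> sign_face v x) -> u = v.
Proof.
move=> E; have [_ Fv] := (E _).1 (sign_face_witnessP u).
apply/rowP => a; have := Fv a; rewrite sign_face_witness_val => /sval_inj.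
by case: (F2_cases (u 0 a)) => ->; case: (F2_cases (v 0 a)) => ->.
Qed.

Lemma sign_face_in_facet (u : 'rV['F_2]_#|S|) (j : sidx n) :
  (forall x, sign_face u x -> facet j x) ->
  exists a, j.1 = enum_val a /\ j.2 = (u 0 a == 1).
Proof.
move=> H; have [_] := H _ (sign_face_witnessP u).
rewrite /sign_face_witness; case: pickP => [b /eqP <- E | _ E].
  by exists b; split => //; symmetry; exact: (@sval_inj R _ _ E).
by have := quarter_gt0 R; move: E; rewrite /sval; case: j.2 => ? ?; lra.
Qed.

End SignFaces.

Section Tau.
Variables (R : realFieldType) (n : nat) (A : 'M['F_2]_n).

(* Each tau_j is an involution of R^n preserving the cube; together these give
   the inverse image needed to describe tau_j(f) as a set. *)
Lemma tau_invol (j : sidx n) (x : point R n) : tau A j (tau A j x) = x.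
Proof.
apply: functional_extensionality => k; rewrite /tau.
by case: (k == j.1); rewrite ?opprK //; case: (A j.1 k == 1); rewrite ?opprK.
Qed.

Lemma tau_cube (j : sidx n) (x : point R n) : cube x -> cube (tau A j x).
Proof.
move=> C k; have /andP[? ?] := C k; rewrite /tau.
by case: (k == j.1); last case: (A j.1 k == 1); apply/andP; split; lra.
Qed.

Hypothesis hdiag : forall i, A i i = 0.
Variable S : {set 'I_n}.

(* On S, tau_j flips coordinate b exactly when the (j, b) entry of the
   principal submatrix of A + I is 1 (the diagonal 1 accounts for y_j = -x_j). *)
Lemma tau_on_support (j : sidx n) (a b : 'I_#|S|) (x : point R n) :
  j.1 = enum_val a ->
  tau A j x (enum_val b) =
  if principal_submx (A + 1%:M) S a b == 1 then - x (enum_val b) else x (enum_val b).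
Proof.
move=> ja; rewrite /tau /principal_submx !mxE ja.
case: eqP => [->|ne]; first by rewrite hdiag eqxx add0r.
have -> : (enum_val a == enum_val b) = false by apply/eqP => E; apply: ne.
by rewrite addr0; case: eqP.
Qed.

Lemma tau_sign_face (u : 'rV['F_2]_#|S|) (j : sidx n) (a : 'I_#|S|) :
  j.1 = enum_val a ->
  imgset (@sign_face R n S u) (tau A j) =
  sign_face (u + row a (principal_submx (A + 1%:M) S)).
Proof.
move=> ja; apply: functional_extensionality => y; apply: propositional_extensionality.
split=> [[x [Cx Fx] ->]|[Cy Fy]].
  split=> [|b]; first exact: tau_cube.
  by rewrite (tau_on_support _ _ ja) !mxE sval_add Fx; case: (_ == 1).
exists (tau A j y); last by rewrite tau_invol.
split=> [|b]; first exact: tau_cube.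
by rewrite (tau_on_support _ _ ja) Fy !mxE sval_add; case: (_ == 1); rewrite ?opprK.
Qed.

End Tau.

Section FaceFamily.
Variables (R : realFieldType) (n : nat) (A : 'M['F_2]_n).
Hypothesis hdiag : forall i, A i i = 0.
Variable S : {set 'I_n}.

Let M := principal_submx (A + 1%:M) S.

Lemma apply_taus_rcons (f : pset R n) ks k :
  apply_taus A f (rcons ks k) = imgset (apply_taus A f ks) (tau A k).
Proof. by rewrite /apply_taus -cats1 foldl_cat. Qed.

Lemma valid_comp_rcons (f : pset R n) ks k :
  valid_comp A f ks -> (forall x, apply_taus A f ks x -> facet k x) ->
  valid_comp A f (rcons ks k).
Proof.
by elim: ks f => [|k' ks IH] f /= => [_ H|[H1 H2] H3]; split=> //; apply: IH.
Qed.

Lemma valid_comp_rowspace ks (u : 'rV['F_2]_#|S|) :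
  valid_comp A (@sign_face R n S u) ks ->
  exists2 v, (v <= M)%MS & apply_taus A (@sign_face R n S u) ks = sign_face (u + v).
Proof.
elim: ks u => [|k ks IH] u /= => [_|[Hk Hks]].
  by exists 0; rewrite ?sub0mx ?addr0.
have [a [ka _]] := sign_face_in_facet Hk.
rewrite (tau_sign_face R hdiag u ka) in Hks *.
have [v vM ->] := IH _ Hks.
by exists (row a M + v); rewrite ?addrA // addmx_sub ?row_sub.
Qed.

Definition reachable (u0 u : 'rV['F_2]_#|S|) : Prop :=
  exists ks, valid_comp A (@sign_face R n S u0) ks /\
             apply_taus A (@sign_face R n S u0) ks = sign_face u.

(* Any row of M can be added, using the facet of S-index a with the sign of u. *)
Lemma reachable_step (u0 u : 'rV['F_2]_#|S|) a :
  reachable u0 u -> reachable u0 (u + row a M).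
Proof.
case=> ks [Hv He]; exists (rcons ks (enum_val a, u 0 a == 1)); split.
  by apply: valid_comp_rcons => // x; rewrite He => -[Cx Fx]; split; last exact: Fx.
by rewrite apply_taus_rcons He (tau_sign_face R hdiag u (j := (enum_val a, u 0 a == 1)) erefl).
Qed.

Lemma reachable_rowspace (u0 w : 'rV['F_2]_#|S|) : reachable u0 (u0 + w *m M).
Proof.
rewrite mulmx_sum_row; elim: (index_enum _) => [|x s IH].
  by rewrite big_nil addr0; exists [::].
rewrite big_cons; case: (F2_cases (w 0 x)) => ->; first by rewrite scale0r add0r.
by rewrite scale1r addrCA addrC; apply: reachable_step.
Qed.

Lemma family_sign_face (u0 : 'rV['F_2]_#|S|) (g : pset R n) :
  face_family A (@sign_face R n S u0) g <->
  exists2 v, v \in rowg M & forall x, g x <-> sign_face (u0 + v) x.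
Proof.
split=> [[ks [Hv Hg]]|[v]].
  have [v vM Ev] := valid_comp_rowspace Hv.
  by exists v; rewrite ?mem_rowg // -Ev.
rewrite mem_rowg => /submxP[w ->] Hg.
have [ks [Hv He]] := reachable_rowspace u0 w.
by exists ks; split=> // x; rewrite He.
Qed.

End FaceFamily.

Lemma sorted_sidx_inj n (J : seq (sidx n)) :
  sorted (fun a b : sidx n => (val a.1 < val b.1)%N) J ->
  forall j j', j \in J -> j' \in J -> j.1 = j'.1 -> j = j'.
Proof.
elim: J => [|x s IH] //= Hp j j'.
have Hall : all (fun b : sidx n => (val x.1 < val b.1)%N) s.
  by apply: (order_path_min _ Hp) => ? ? ?; apply: ltn_trans.
rewrite !inE => /orP[/eqP->|js] /orP[/eqP->|j's] // E.
- by move/allP: Hall => /(_ _ j's); rewrite E ltnn.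
- by move/allP: Hall => /(_ _ js); rewrite E ltnn.
- exact: IH (path_sorted Hp) _ _ js j's E.
Qed.

Definition face_signs n (J : seq (sidx n)) : 'rV['F_2]_#|[set j.1 | j in J]| :=
  \row_a (if [pick j in J | j.1 == enum_val a] is Some j then (j.2)%:R else 0).

(* Since |j| determines j within J, F(j_1, ..., j_s) is the sign face of the
   sign vector of J. *)
Lemma faceF_sign_face (R : realFieldType) n (J : seq (sidx n)) :
  sorted (fun a b : sidx n => (val a.1 < val b.1)%N) J ->
  faceF J = @sign_face R n _ (face_signs J).
Proof.
move=> hJ; apply: functional_extensionality => x; apply: propositional_extensionality.
split=> -[Cx Fx]; split=> //.
- move=> a; rewrite /face_signs mxE; have /imsetP[j jJ ja] := enum_valP a.
  case: pickP => [j' /andP[j'J /eqP <-]|/(_ j)]; last by rewrite jJ -ja eqxx.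
  by rewrite Fx //; case: j'.2.
- move=> j jJ; have jS : j.1 \in [set j.1 | j in J] by apply: imset_f.
  rewrite -(enum_rankK_in jS jS) Fx /face_signs mxE enum_rankK_in //.
  case: pickP => [j' /andP[j'J /eqP E]|/(_ j)]; last by rewrite jJ eqxx.
  by rewrite (sorted_sidx_inj hJ j'J jJ E); case: j.2.
Qed.

Unset Implicit Arguments.

Theorem mainTheorem11 (R : realFieldType) (n : nat) (A : 'M['F_2]_n)
  (J : seq (sidx n))
  (hdiag : forall i, A i i = 0)
  (hJ0 : J != [::])
  (hJsort : sorted (fun a b : sidx n => (val a.1 < val b.1)%N) J) :
  let At := A + 1%:M in
  let d := \rank (principal_submx At [set j.1 | j in J]) in
  exists L : seq (pset R n),
    size L = (2 ^ d)%N /\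
    (forall i1 i2, (i1 < size L)%N -> (i2 < size L)%N -> i1 <> i2 ->
       ~ (forall x, nth (fun _ => False) L i1 x <-> nth (fun _ => False) L i2 x)) /\
    (forall g : pset R n,
       face_family A (faceF J) g <->
       exists i, (i < size L)%N /\ (forall x, g x <-> nth (fun _ => False) L i x)).
Proof.
move=> At d; set u0 := face_signs J.
set E := enum (rowg (principal_submx At [set j.1 | j in J])).
exists [seq @sign_face R n _ (u0 + v) | v <- E]; rewrite size_map.
have nthL i : (i < size E)%N ->
    nth (fun _ => False) [seq sign_face (u0 + v) | v <- E] i = sign_face (u0 + nth 0 E i).
  by move=> Hi; rewrite (nth_map 0).
split; first by rewrite /E -cardE card_rowg card_Fp.
split=> [i1 i2 H1 H2 ne|g].
  rewrite !nthL // => /sign_face_inj /addrI /eqP.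
  by rewrite nth_uniq ?enum_uniq // => /eqP.
rewrite faceF_sign_face // family_sign_face //.
split=> [[v vM Hg]|[i [Hi Hg]]].
  have vE : v \in E by rewrite mem_enum.
  exists (index v E); split; first by rewrite index_mem.
  by rewrite nthL ?index_mem // nth_index.
have vE : nth 0 E i \in E by apply: mem_nth.
rewrite mem_enum in vE.
by exists (nth 0 E i) => //; rewrite -nthL.
Qed.
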